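(* Let $a<b$ be real, $U\subset[a,b]$ measurable, and $R\ge b-a$. Then for every finite-perimeter set $S\subset\mathbb{R}$, $$\mathrm{NM}_S(U)\le\operatorname{diam}\big((a,b)\cap\partial_{\mathcal H^1}S\big)\le\widehat\omega_{S,R}\big((a,b)\big),$$ with the convention $\operatorname{diam}(\emptyset)=0$.
   Context: For measurable $S\subset\mathbb{R}$, $\partial_{\mathcal H^1}S$ is the set of $x$ with $0<\mathcal H^1((x-\epsilon,x+\epsilon)\cap S)<2\epsilon$ for all $\epsilon>0$; $S$ has finite perimeter if $\partial_{\mathcal H^1}S$ is finite. Then there is a unique family $\mathcal I(S)$ of disjoint closed intervals of positive length with $S\triangle\bigcup\mathcal I(S)$ null. A set $M\subset\mathbb{R}$ is monotone if it is $\emptyset$, $\mathbb{R}$, or a ray; $\mathrm{NM}_S(U)=\inf\{\mathcal H^1(U\cap(M\triangle S)):M\text{ monotone}\}$. For $R>0$, $\omega_{S,R}=\sum_{I\in\mathcal I(S),\,\mathcal H^1(I)\le R}\mathcal H^1(I)(\delta_{\min I}+\delta_{\max I})$ and $\widehat\omega_{S,R}=\frac12(\omega_{S,R}+\omega_{\mathbb{R}\setminus S,R})$. *)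

From HB Require Import structures.
From mathcomp Require Import all_boot all_order all_algebra.
From mathcomp Require Import all_classical all_reals all_analysis.
Set Implicit Arguments. Unset Strict Implicit. Unset Printing Implicit Defensive.
Import Order.TTheory GRing.Theory Num.Theory.
Local Open Scope classical_set_scope.
Local Open Scope ring_scope.
Local Open Scope ereal_scope.

Section Defs.
Context {R : realType}.
(* H^1 on R: the (completed) Lebesgue measure, defined on all sets via
   conversion; Lebesgue measurability = Caratheodory measurability for the
   outer measure generated by interval length. *)
Local Notation mu := (@completed_lebesgue_measure R).

Definition lebesgue_measurable (A : set R) : Prop :=
  @measurable _ (caratheodory_type ((wlength (R:=R) idfun)^*)%mu) A.

Definition mbdry (S : set R) : set R :=
  [set x | forall eps : R, (0 < eps)%R ->
     0 < mu (`](x - eps)%R, (x + eps)%R[ `&` S) /\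
     mu (`](x - eps)%R, (x + eps)%R[ `&` S) < (2 * eps)%:E].

Definition finite_perimeter (S : set R) : Prop := finite_set (mbdry S).

Definition closed_pos_itv (I : set R) : Prop :=
  exists l u : \bar R, l < u /\ I = [set x : R | l <= x%:E <= u].

Definition is_itv_family (S : set R) (F : set (set R)) : Prop :=
  [/\ (forall I, F I -> closed_pos_itv I),
      (forall I J, F I -> F J -> I <> J -> I `&` J = set0) &
      mu.-negligible ((S `\` \bigcup_(I in F) I) `|` ((\bigcup_(I in F) I) `\` S))].

(* I(S): the unique such family (chosen by description) *)
Definition itv_family (S : set R) : set (set R) :=
  xget set0 [set F | is_itv_family S F].

(* min I and max I (used only for bounded I, where inf/sup are attained) *)
Definition itv_min (I : set R) : R := fine (ereal_inf (EFin @` I)).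
Definition itv_max (I : set R) : R := fine (ereal_sup (EFin @` I)).

Definition omega (S : set R) (Rr : R) (A : set R) : \bar R :=
  \esum_(I in [set I | itv_family S I /\ mu I <= Rr%:E])
     (mu I * ((\1_A (itv_min I))%:E + (\1_A (itv_max I))%:E)).

Definition omega_hat (S : set R) (Rr : R) (A : set R) : \bar R :=
  (omega S Rr A + omega (~` S) Rr A) * (2^-1)%:E.

Definition monotone (M : set R) : Prop :=
  M = set0 \/ M = setT \/
  exists c : R, M = [set` `[c, +oo[%R] \/ M = [set` `]c, +oo[%R] \/
    M = [set` `]-oo, c]%R] \/ M = [set` `]-oo, c[%R].

Definition NM (S U : set R) : \bar R :=
  ereal_inf [set mu (U `&` ((M `\` S) `|` (S `\` M))) | M in monotone].

Definition diam (A : set R) : \bar R :=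
  if `[< A = set0 >] then 0
  else ereal_sup [set (`|x - y|)%:E | x in A & y in A].

End Defs.

(* Write B for the (finite) measure-theoretic boundary ∂S.  The key fact is
   that on an open interval free of points of B, either S or its complement is
   null: the points near which S is null and those near which ~S is null form
   two disjoint open sets covering such an interval, which is connected
   ([gap_dichotomy]).  Consequently the family I(S) can be exhibited
   explicitly, as the closures of those gaps of B on which ~S is null
   ([gap_family_valid]); in particular no interval of I(S) has a boundary point
   in its interior.

   Let p <= q be the extreme points of B in (a,b).
   - First inequality: S is null or full on (a,p) and on (q,b), so one of the
     monotone sets ∅, ℝ, [p,+oo), (-oo,q] agrees with S on U outside [p,q]
     ([NM_le_width]); if B misses (a,b), take p = q = a.
   - Second inequality: up to a null set, [p,q] is covered by the intervals of
     I(S) and I(~S) contained in [p,q] ([inner_itvs_cover]); these intervals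
     are disjoint, so their lengths add up to at least q - p, and each has
     both endpoints in (a,b), so it contributes twice its length to ω
     ([omega_ge_inner]). *)
From Pilot Require Import Defs.
From HB Require Import structures.
From mathcomp Require Import all_boot all_order all_algebra.
From mathcomp Require Import all_classical all_reals all_analysis.
From mathcomp Require Import finmap.
From mathcomp.algebra_tactics Require Import lra.
Import Order.TTheory GRing.Theory Num.Theory.
Import numFieldNormedType.Exports.
Set Implicit Arguments.
Unset Strict Implicit.
Unset Printing Implicit Defensive.
Local Open Scope classical_set_scope.
Local Open Scope ring_scope.

Section OuterMeasure.
Context {R : realType}.
Local Notation mu := (@completed_lebesgue_measure R).
Local Open Scope ereal_scope.

Lemma muE (A : set R) : mu A = ((wlength (R:=R) idfun)^*)%mu A.
Proof. by []. Qed.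

Lemma mu_ge0 (A : set R) : 0 <= mu A.
Proof. by rewrite muE outer_measure_ge0. Qed.

Lemma mu_le (A B : set R) : A `<=` B -> mu A <= mu B.
Proof. by move=> AB; rewrite !muE; apply: le_outer_measure. Qed.

Lemma mu_setU (A B : set R) : mu (A `|` B) <= mu A + mu B.
Proof. by rewrite !muE; apply: outer_measureU2. Qed.

Lemma mu_bigcup (F : (set R)^nat) : mu (\bigcup_n F n) <= \sum_(i <oo) mu (F i).
Proof. by rewrite muE; apply: outer_measure_sigma_subadditive. Qed.

Lemma mu_set1 (x : R) : mu [set x] = 0.
Proof. exact: lebesgue_measure_set1. Qed.

Lemma mu_itv (i : interval R) :
  mu [set` i] = if (i.1 : \bar R) < i.2 then (i.2 : \bar R) - i.1 else 0.
Proof. exact: lebesgue_measure_itv. Qed.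

Lemma mu_cc (x y : R) : (x <= y)%R -> mu `[x, y] = (y - x)%:E.
Proof.
move=> xy; rewrite mu_itv /= lte_fin.
case: ifPn => [_|]; first by rewrite EFinB.
rewrite -leNgt => yx; have -> : y = x by apply/eqP; rewrite eq_le xy yx.
by rewrite subrr.
Qed.

Lemma mu_ball (x e : R) : (0 < e)%R -> mu `](x - e)%R, (x + e)%R[ = (2 * e)%R%:E.
Proof.
move=> e0; rewrite mu_itv /= lte_fin ifT; last lra.
by rewrite -EFinB; congr EFin; lra.
Qed.

Lemma mu_split (T : set R) : lebesgue_measurable T ->
  forall X, mu X = mu (X `&` T) + mu (X `&` ~` T).
Proof. by move=> mT X; apply: mT. Qed.

Lemma measurableC_leb (S : set R) : lebesgue_measurable S -> lebesgue_measurable (~` S).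
Proof. exact: (@measurableC _ (caratheodory_type ((wlength (R:=R) idfun)^*)%mu)). Qed.

Lemma null_sub (A B : set R) : A `<=` B -> mu B = 0 -> mu A = 0.
Proof. by move=> AB B0; apply/eqP; rewrite eq_le mu_ge0 andbT -B0 mu_le. Qed.

Lemma null_set0 : mu (@set0 R) = 0.
Proof. by rewrite muE outer_measure0. Qed.

Lemma null_setU (A B : set R) : mu A = 0 -> mu B = 0 -> mu (A `|` B) = 0.
Proof.
move=> A0 B0; apply/eqP; rewrite eq_le mu_ge0 andbT.
by rewrite (le_trans (mu_setU _ _))// A0 B0 adde0.
Qed.

Lemma null_measurable (A : set R) : mu A = 0 -> lebesgue_measurable A.
Proof.
move=> A0; suff split_mu : forall X, mu X = mu (X `&` A) + mu (X `&` ~` A).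
  exact: split_mu.
move=> X; apply/eqP; rewrite eq_le; apply/andP; split.
  by rewrite -[X in mu X <= _](setIT X) -(setUCr A) setIUr mu_setU.
have XA0 : mu (X `&` A) = 0 by apply: null_sub A0; apply: subIsetr.
by rewrite XA0 add0e mu_le//; apply: subIsetl.
Qed.

Lemma null_negligible (A : set R) : mu A = 0 -> mu.-negligible A.
Proof. by move=> A0; exists A; split => //; apply: null_measurable. Qed.

Lemma negligible_null (A : set R) : mu.-negligible A -> mu A = 0.
Proof. by move=> [N [_ N0 AN]]; apply: null_sub AN N0. Qed.

Lemma null_bigcup_finite (I : eqType) (X : set I) (F : I -> set R) :
  finite_set X -> (forall i, X i -> mu (F i) = 0) -> mu (\bigcup_(i in X) F i) = 0.
Proof.
move=> /finite_seqP[s ->]; elim: s => [|i s IH] F0.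
  by apply: null_sub null_set0 => x [].
apply: (null_sub (B := F i `|` \bigcup_(j in [set` s]) F j)).
  by move=> x [j /=]; rewrite inE => /orP[/eqP->|js] Fx; [left|right; exists j].
apply: null_setU; first by apply: F0; rewrite /= inE eqxx.
by apply: IH => j js; apply: F0; rewrite /= inE js orbT.
Qed.

Lemma null_finite (X : set R) : finite_set X -> mu X = 0.
Proof.
move=> fX; apply: (null_sub (B := \bigcup_(i in X) [set i])).
  by move=> x Xx; exists x.
by apply: null_bigcup_finite => // i _; apply: mu_set1.
Qed.

End OuterMeasure.

Section LocalNullity.
Context {R : realType}.
Local Notation mu := (@completed_lebesgue_measure R).

Lemma in_ball_itv (x e y : R) : (y \in `](x - e), (x + e)[) = (`|y - x| < e).
Proof. by rewrite in_itv /= ltr_norml; apply/andP/andP => -[h1 h2]; split; lra. Qed.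

Lemma open_itv_balls (A : set R) :
  (forall x, A x -> exists2 e : R, 0 < e & `](x - e), (x + e)[ `<=` A) -> open A.
Proof.
move=> Aballs; rewrite openE => x Ax; apply/nbhs_ballP.
by have [e e0 Ae] := Aballs x Ax; exists e => //; rewrite ball_itv.
Qed.

Lemma null_on_compact (K P : set R) : compact K ->
  (forall x, K x -> exists2 e : R, 0 < e & mu (`](x - e), (x + e)[ `&` P) = 0%E) ->
  mu (K `&` P) = 0%E.
Proof.
move=> cK locP.
have radius x : exists r : R, K x -> 0 < r /\ mu (`](x - r), (x + r)[ `&` P) = 0%E.
  have [Kx|nKx] := pselect (K x); last by exists 1.
  by have [r r0 Pr] := locP x Kx; exists r.
have [e He] := choice radius.
move: cK; rewrite compact_cover => /(_ R K (fun x => [set` `](x - e x), (x + e x)[])).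
case=> [i _|x Kx|D DK cov]; first exact: itv_open.
  exists x => //=; rewrite in_itv/= ltrBlDr ltrDl.
  by have [-> _] := He x Kx.
apply: (null_sub (B := \bigcup_(i in [set` D]) (`](i - e i), (i + e i)[ `&` P))).
  by move=> x [/cov [i Di fx] Px]; exists i.
apply: null_bigcup_finite; first exact: finite_fset.
by move=> i /= /DK /set_mem Ki; have [] := He i Ki.
Qed.

Lemma null_locally (P : set R) :
  (forall x, exists2 e : R, 0 < e & mu (`](x - e), (x + e)[ `&` P) = 0%E) ->
  mu P = 0%E.
Proof.
move=> locP.
apply: (null_sub (B := \bigcup_n (`[(- n%:R), n%:R] `&` P))).
  move=> x Px; exists (Num.truncn `|x|).+1 => //; split => //.
  rewrite /= in_itv /=; have := truncnS_gt `|x|.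
  by move: (Num.truncn _).+1 => n; rewrite ltr_norml => /andP[h1 h2]; apply/andP; split; lra.
apply/eqP; rewrite eq_le mu_ge0 andbT (le_trans (mu_bigcup _))// eseries0// => n _ _.
by apply: null_on_compact; [exact: segment_compact|move=> x _; exact: locP].
Qed.

Definition locally_null (T : set R) (x : R) :=
  exists2 e : R, 0 < e & mu (`](x - e), (x + e)[ `&` T) = 0%E.

Lemma locally_null_open (T : set R) : open (locally_null T).
Proof.
apply: open_itv_balls => x [e e0 Te]; exists (e / 2); first lra.
move=> y; rewrite /= in_ball_itv => yx; exists (e / 2); first lra.
apply: null_sub Te => z [zy Tz]; split => //.
by move: yx zy; rewrite /= !in_itv /= ltr_norml => /andP[? ?] /andP[? ?]; apply/andP; split; lra.
Qed.

(* No point is locally null for both T and its complement, as intervals have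
   positive measure. *)
Lemma locally_null_excl (T : set R) x : locally_null T x -> ~ locally_null (~` T) x.
Proof.
move=> [e e0 Te] [f f0 Tf].
pose d := Order.min e f.
have d0 : 0 < d by rewrite lt_min e0 f0.
have de : d <= e by rewrite ge_min lexx.
have df : d <= f by rewrite ge_min lexx orbT.
have sub : `](x - d), (x + d)[ `<=` (`](x - e), (x + e)[ `&` T) `|` (`](x - f), (x + f)[ `&` ~` T).
  move=> y; rewrite /= !in_itv /= => /andP[h1 h2].
  have yin g : d <= g -> y \in `](x - g), (x + g)[.
    by move=> dg; rewrite in_itv /=; apply/andP; split; lra.
  by have [Ty|nTy] := pselect (T y); [left|right]; split => //; exact: yin.
by have := null_sub sub (null_setU Te Tf); rewrite mu_ball // => -[]; lra.
Qed.

Lemma locally_null_off_bdry (T : set R) x : lebesgue_measurable T -> ~ mbdry T x ->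
  locally_null T x \/ locally_null (~` T) x.
Proof.
move=> mT; rewrite /mbdry /= => /existsNP[e] /not_implyP[e0 /not_andP nbdry].
have Tsplit := mu_split mT `](x - e), (x + e)[.
rewrite mu_ball // in Tsplit.
case: nbdry => /negP; rewrite -leNgt => Te.
  by left; exists e => //; apply/eqP; rewrite eq_le mu_ge0 andbT.
right; exists e => //; apply/eqP; rewrite eq_le mu_ge0 andbT.
have Tfin : mu (`](x - e), (x + e)[ `&` T) \is a fin_num.
  rewrite ge0_fin_numE ?mu_ge0// (le_lt_trans (mu_le (@subIsetl _ _ T)))//.
  by rewrite mu_ball// ltry.
by rewrite -(leeD2lE _ _ Tfin) adde0 -Tsplit.
Qed.

(* A point near which the complement of T is null is not a boundary point of
   T, since T would then fill a whole interval around it. *)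
Lemma locally_null_compl_not_bdry (T : set R) x : locally_null (~` T) x -> ~ mbdry T x.
Proof.
move=> [d d0 Nd] Tx; have [_ Td] := Tx d d0.
have := mu_setU (`](x - d), (x + d)[ `&` T) (`](x - d), (x + d)[ `&` ~` T).
rewrite -setIUr setUCr setIT Nd adde0 mu_ball// => dT.
by move: (lt_le_trans Td dT); rewrite ltxx.
Qed.

End LocalNullity.

Section Gaps.
Context {R : realType}.
Local Notation mu := (@completed_lebesgue_measure R).

Definition eoo (l u : \bar R) : set R := [set x | (l < x%:E)%E /\ (x%:E < u)%E].

Lemma eoo_nbhs l u x : eoo l u x ->
  exists2 d : R, 0 < d & forall y, `|y - x| < d -> eoo l u y.
Proof.
move=> [lx xu].
have [d1 d10 H1] : exists2 d1 : R, 0 < d1 & forall y, `|y - x| < d1 -> (l < y%:E)%E.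
  case: l lx => [r||] //= => [|_]; last by exists 1 => // y _; exact: ltNyr.
  rewrite lte_fin => rx; exists (x - r); first lra.
  by move=> y; rewrite ltr_norml lte_fin => /andP[? ?]; lra.
have [d2 d20 H2] : exists2 d2 : R, 0 < d2 & forall y, `|y - x| < d2 -> (y%:E < u)%E.
  case: u xu => [r||] //= => [|_]; last by exists 1 => // y _; exact: ltry.
  rewrite lte_fin => rx; exists (r - x); first lra.
  by move=> y; rewrite ltr_norml lte_fin => /andP[? ?]; lra.
exists (Order.min d1 d2); first by rewrite lt_min d10 d20.
by move=> y; rewrite lt_min => /andP[y1 y2]; split; [exact: H1|exact: H2].
Qed.

Lemma eoo_connected l u : connected (eoo l u).
Proof.
apply/connected_intervalP => x y [lx _] [_ yu] z /andP[xz zy]; split.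
  by apply: (lt_le_trans lx); rewrite lee_fin.
by apply: le_lt_trans yu; rewrite lee_fin.
Qed.

(* On an interval free of boundary points, T or ~T is locally null everywhere:
   the two open sets where this happens are disjoint and cover the interval. *)
Lemma eoo_locally_null (T : set R) l u : lebesgue_measurable T ->
  (forall x, eoo l u x -> ~ mbdry T x) ->
  (forall x, eoo l u x -> locally_null T x) \/
  (forall x, eoo l u x -> locally_null (~` T) x).
Proof.
move=> mT nbdry.
have [[x0 [x0lu Nx0]]|none] := pselect (exists x, eoo l u x /\ locally_null T x);
  last first.
  right => x xlu; have [NT|//] := locally_null_off_bdry mT (nbdry x xlu).
  by exfalso; apply: none; exists x.
left; suff full : eoo l u `&` locally_null T = eoo l u.
  by move=> x xlu; rewrite -full in xlu; case: xlu.
apply: eoo_connected; first by exists x0.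
  by exists (locally_null T) => //; exact: locally_null_open.
exists (~` locally_null (~` T)); first exact/open_closedC/locally_null_open.
apply/seteqP; split => x [xlu Nx]; split => //=.
  exact: locally_null_excl.
by have [//|] := locally_null_off_bdry mT (nbdry x xlu).
Qed.

(* If T is locally null at each point of eoo l u, then T is null there: the
   points of T whose 1/(n+1)-ball lies in eoo l u form a set that is locally
   null at every point of R. *)
Lemma eoo_null (T : set R) l u : (forall x, eoo l u x -> locally_null T x) ->
  mu (eoo l u `&` T) = 0%E.
Proof.
move=> locT.
pose A n := [set x | T x /\ forall y, `|y - x| < n.+1%:R^-1 -> eoo l u y].
apply: (null_sub (B := \bigcup_n A n)).
  move=> x [xlu Tx]; have [d d0 Hd] := eoo_nbhs xlu.
  exists (Num.truncn (d^-1)) => //; split => // y yx; apply: Hd.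
  apply: (lt_trans yx); rewrite invf_plt ?posrE ?ltr0n ?invr_gt0//.
  exact: truncnS_gt.
apply/eqP; rewrite eq_le mu_ge0 andbT (le_trans (mu_bigcup _))// eseries0// => n _ _.
apply: null_locally => z.
have [zlu|nzlu] := pselect (eoo l u z).
  have [e e0 Te] := locT z zlu; exists e => //.
  by apply: null_sub Te => y [yz [Ty _]].
exists n.+1%:R^-1; first by rewrite invr_gt0 ltr0n.
apply: null_sub null_set0 => y [yz [_ Hy]]; apply: nzlu; apply: Hy.
by rewrite distrC -in_ball_itv.
Qed.

Lemma gap_dichotomy (T : set R) l u : lebesgue_measurable T ->
  (forall x, eoo l u x -> ~ mbdry T x) ->
  mu (eoo l u `&` T) = 0%E \/ mu (eoo l u `&` ~` T) = 0%E.
Proof.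
by move=> mT nbdry; case: (eoo_locally_null mT nbdry) => H; [left|right];
  exact: eoo_null.
Qed.

End Gaps.

Section FiniteSets.
Context {R : realType}.

Lemma seq_max (s : seq R) a :
  exists2 m, m \in a :: s & forall x, x \in a :: s -> x <= m.
Proof.
elim: s a => [|b s IH] a.
  by exists a; [rewrite inE|move=> x; rewrite inE => /eqP->].
have [m ms Hm] := IH b; have [am|ma] := leP a m.
  exists m; first by rewrite inE ms orbT.
  by move=> x; rewrite inE => /orP[/eqP->//|/Hm].
exists a; first by rewrite inE eqxx.
by move=> x; rewrite inE => /orP[/eqP->//|/Hm xm]; exact/ltW/(le_lt_trans xm).
Qed.

Lemma finite_max (A : set R) : finite_set A -> A !=set0 ->
  exists2 m, A m & forall x, A x -> x <= m.
Proof.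
move=> /finite_seqP[[|a s] ->] [x0 Ax0] //.
by have [m ms Hm] := seq_max s a; exists m => // x; exact: Hm.
Qed.

Lemma finite_min (A : set R) : finite_set A -> A !=set0 ->
  exists2 m, A m & forall x, A x -> m <= x.
Proof.
move=> fA [x0 Ax0].
have nA : (-%R @` A) !=set0 by exists (- x0), x0.
have [_ [m Am <-] mmax] := finite_max (finite_image -%R fA) nA.
by exists m => // x Ax; rewrite -lerN2; apply: mmax; exists x.
Qed.

Lemma finite_extremes (D : set R) : finite_set D -> D !=set0 ->
  exists p q, [/\ D p, D q & D `<=` `[p, q]].
Proof.
move=> fD D0; have [p Dp pmin] := finite_min fD D0; have [q Dq qmax] := finite_max fD D0.
by exists p, q; split => // x Dx; rewrite /= in_itv /= pmin ?qmax.
Qed.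

End FiniteSets.

Section BoundaryComplement.
Context {R : realType}.

Lemma sum_fin_num (a b : \bar R) (c : R) : (0 <= a)%E -> (0 <= b)%E ->
  (a + b = c%:E)%E -> exists a' b', [/\ a = a'%:E, b = b'%:E & a' + b' = c].
Proof.
case: a => [a'||]; case: b => [b'||] //= a0 b0 [ab].
by exists a', b'.
Qed.

Lemma mbdryC_sub (S : set R) : lebesgue_measurable S -> mbdry S `<=` mbdry (~` S).
Proof.
move=> mS x Sx e e0; have [h1 h2] := Sx e e0.
have Ssplit := mu_split mS `](x - e), (x + e)[; rewrite mu_ball// in Ssplit.
have [a' [b' [Ea Eb ab]]] := sum_fin_num (mu_ge0 _) (mu_ge0 _) (esym Ssplit).
by move: h1 h2; rewrite Ea Eb !lte_fin => h1 h2; split; lra.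
Qed.

Lemma mbdryC (S : set R) : lebesgue_measurable S -> mbdry (~` S) = mbdry S.
Proof.
move=> mS; apply/seteqP; split; last exact: mbdryC_sub.
by have := mbdryC_sub (measurableC_leb mS); rewrite setCK.
Qed.

End BoundaryComplement.

Section IntervalFamily.
Context {R : realType}.
Local Notation mu := (@completed_lebesgue_measure R).
Local Open Scope ereal_scope.

Definition bdry_endpoint (B : set R) (l : \bar R) :=
  l = -oo \/ l = +oo \/ exists2 r, B r & l = r%:E.

(* (l, u) is a gap of B, i.e. a connected component of the complement of B. *)
Definition bdry_gap (B : set R) (l u : \bar R) :=
  [/\ l < u, bdry_endpoint B l, bdry_endpoint B u & forall x, eoo l u x -> ~ B x].

Definition ecc (l u : \bar R) : set R := [set x | l <= x%:E <= u].

Lemma bdry_endpoint_real B (l : \bar R) x : bdry_endpoint B l -> l = x%:E -> B x.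
Proof. by move=> [->//|[->//|[r Br ->]]] [<-]. Qed.

Lemma bdry_endpoint_finite (B : set R) : finite_set B -> finite_set (bdry_endpoint B).
Proof.
move=> fB; apply: (sub_finite_set (B := [set -oo; +oo] `|` (EFin @` B))).
  by move=> l [->|[->|[r Br ->]]]; [left; left|left; right|right; exists r].
by rewrite finite_setU; split; [exact: finite_set2|exact: finite_image].
Qed.

Lemma bdry_gap_before B l u l' u' : bdry_gap B l u -> bdry_gap B l' u' ->
  l < l' -> u <= l'.
Proof.
move=> [lu _ _ noB] [lu' El' _ _] ll'.
case: El' => [El'|[El'|[r Br El']]].
- by rewrite El' ltNge leNye in ll'.
- by rewrite El' ltNge leey in lu'.
rewrite leNgt; apply/negP => ul'; apply: (noB r) => //; split; rewrite -El' //.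
Qed.

Lemma bdry_gap_same_start B l u u' : bdry_gap B l u -> bdry_gap B l u' -> u <= u'.
Proof.
move=> [lu _ _ noB] [lu' _ Eu' _]; rewrite leNgt; apply/negP => u'u.
case: Eu' => [Eu|[Eu|[r Br Eu]]].
- by rewrite Eu ltNge leNye in lu'.
- by rewrite Eu ltNge leey in u'u.
by apply: (noB r) => //; split; rewrite -Eu.
Qed.

Lemma bdry_gap_meet B l u l' u' x : bdry_gap B l u -> bdry_gap B l' u' ->
  ecc l u x -> ecc l' u' x ->
  (l = l' /\ u = u') \/ (u = x%:E /\ l' = x%:E) \/ (u' = x%:E /\ l = x%:E).
Proof.
move=> g g' /andP[lx xu] /andP[l'x xu'].
case: (ltgtP l l') => [ll'|l'l|ll'].
- right; left; have ul' := bdry_gap_before g g' ll'.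
  have ux : u = x%:E by apply/eqP; rewrite eq_le xu (le_trans ul' l'x).
  by split => //; apply/eqP; rewrite eq_le l'x -ux ul'.
- right; right; have u'l := bdry_gap_before g' g l'l.
  have u'x : u' = x%:E by apply/eqP; rewrite eq_le xu' (le_trans u'l lx).
  by split => //; apply/eqP; rewrite eq_le lx -u'x u'l.
- left; split => //; subst l'; apply/eqP; rewrite eq_le.
  by rewrite (bdry_gap_same_start g g') (bdry_gap_same_start g' g).
Qed.

Lemma bdry_gap_of (B : set R) x : finite_set B -> ~ B x ->
  exists l u, bdry_gap B l u /\ eoo l u x.
Proof.
move=> fB nBx.
pose L := [set b | B b /\ (b < x)%R]; pose U := [set b | B b /\ (x < b)%R].
have [l [El Hl lx]] :
    exists l, [/\ bdry_endpoint B l, (forall b, L b -> b%:E <= l) & l < x%:E].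
  have [[b0 Lb0]|L0] := pselect (L !=set0); last first.
    exists -oo; split; [by left| |exact: ltNyr].
    by move=> b Lb; exfalso; apply: L0; exists b.
  have [m [Bm mx] Hm] := finite_max (finite_setIl _ fB) (ex_intro _ b0 Lb0).
  exists m%:E; split; [by right; right; exists m| |by rewrite lte_fin].
  by move=> b Lb; rewrite lee_fin; exact: Hm.
have [u [Eu Hu xu]] :
    exists u, [/\ bdry_endpoint B u, (forall b, U b -> u <= b%:E) & x%:E < u].
  have [[b0 Ub0]|U0] := pselect (U !=set0); last first.
    exists +oo; split; [by right; left| |exact: ltry].
    by move=> b Ub; exfalso; apply: U0; exists b.
  have [m [Bm mx] Hm] := finite_min (finite_setIl _ fB) (ex_intro _ b0 Ub0).
  exists m%:E; split; [by right; right; exists m| |by rewrite lte_fin].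
  by move=> b Ub; rewrite lee_fin; exact: Hm.
exists l, u; split => //; split => //; first exact: lt_trans lx xu.
move=> y [ly yu] By; have [yx|xy|yx] := ltgtP y x.
- by have := Hl y (conj By yx); rewrite leNgt ly.
- by have := Hu y (conj By xy); rewrite leNgt yu.
- by apply: nBx; rewrite -yx.
Qed.

Lemma conull_sides_not_bdry (T : set R) l u x : l < x%:E -> x%:E < u ->
  mu (eoo l x%:E `&` ~` T) = 0 -> mu (eoo x%:E u `&` ~` T) = 0 -> ~ mbdry T x.
Proof.
move=> lx xu N1 N2; have [d d0 Hd] := eoo_nbhs (conj lx xu).
apply: locally_null_compl_not_bdry; exists d => //.
apply: (null_sub (B := (eoo l x%:E `&` ~` T) `|` [set x] `|` (eoo x%:E u `&` ~` T))).
  move=> y [yin nTy]; have := Hd y; rewrite -in_ball_itv => /(_ yin) [ly yu].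
  have [yx|xy|->] := ltgtP y x; last by left; right.
  + by left; left; split => //; split => //; rewrite lte_fin.
  + by right; split => //; split => //; rewrite lte_fin.
by rewrite !null_setU ?mu_set1.
Qed.

Definition gap_family (T : set R) : set (set R) :=
  [set I | exists l u, [/\ bdry_gap (mbdry T) l u, mu (eoo l u `&` ~` T) = 0
                        & I = ecc l u]].

Lemma gap_family_disjoint (T : set R) I J : gap_family T I -> gap_family T J ->
  I <> J -> I `&` J = set0.
Proof.
move=> [l [u [g N ->]]] [l' [u' [g' N' ->]]] IJ.
apply/seteqP; split => // x [Ix Jx].
have [lu El Eu _] := g; have [lu' El' Eu' _] := g'.
have [[ll' uu']|[[ux l'x]|[u'x lx]]] := bdry_gap_meet g g' Ix Jx.
- by apply: IJ; rewrite ll' uu'.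
- rewrite ux in lu N; rewrite l'x in lu' N'.
  by apply: (conull_sides_not_bdry lu lu' N N'); exact: bdry_endpoint_real Eu ux.
- rewrite u'x in lu' N'; rewrite lx in lu N.
  by apply: (conull_sides_not_bdry lu' lu N' N); exact: bdry_endpoint_real El lx.
Qed.

Lemma null_if_null (A : set R) : mu [set y | A y /\ mu A = 0] = 0.
Proof.
have [A0|A0] := pselect (mu A = 0); first by apply: null_sub A0 => y [].
by apply: null_sub null_set0 => y [].
Qed.

(* Off the finite boundary, a point of T lies in a gap where ~T is null, and a
   point outside T lies in a gap where T is null; the union of these
   (finitely many) null pieces controls the symmetric difference. *)
Lemma gap_family_ae (T : set R) : lebesgue_measurable T -> finite_perimeter T ->
  mu ((T `\` \bigcup_(I in gap_family T) I) `|` ((\bigcup_(I in gap_family T) I) `\` T)) = 0.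
Proof.
move=> mT fT; pose B := mbdry T; pose P := bdry_endpoint B `*` bdry_endpoint B.
have fP : finite_set P by apply: finite_setX; exact: bdry_endpoint_finite.
pose Z (V : set R) := \bigcup_(p in P)
  [set y | (eoo p.1 p.2 `&` V) y /\ mu (eoo p.1 p.2 `&` V) = 0].
have ZV0 V : mu (Z V) = 0 by apply: null_bigcup_finite => // p _; exact: null_if_null.
apply: (null_sub (B := B `|` Z T `|` Z (~` T))); last first.
  by rewrite !null_setU ?ZV0 ?null_finite.
move=> x; have [Bx _|nBx] := pselect (B x); first by left; left.
move=> [[Tx nFx]|[[I [l [u [g N ->]]] /andP[lx xu]] nTx]].
- have [l [u [g xlu]]] := bdry_gap_of fT nBx; have [_ El Eu noB] := g.
  case: (gap_dichotomy mT noB) => N; first by left; right; exists (l, u).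
  exfalso; apply: nFx; exists (ecc l u); first by exists l, u.
  by case: xlu => ? ?; apply/andP; split; apply: ltW.
- right; have [_ El Eu _] := g; exists (l, u) => //; split => //; split => //.
  split; rewrite lt_neqAle ?lx ?xu andbT; apply/eqP => E; apply: nBx.
    exact: bdry_endpoint_real El E.
  exact: bdry_endpoint_real Eu (esym E).
Qed.

Lemma gap_family_valid (T : set R) : lebesgue_measurable T -> finite_perimeter T ->
  is_itv_family T (gap_family T).
Proof.
move=> mT fT; split; last exact/null_negligible/gap_family_ae.
  by move=> I [l [u [[lu _ _ _] _ ->]]]; exists l, u.
exact: gap_family_disjoint.
Qed.

Lemma itv_family_valid (T : set R) : lebesgue_measurable T -> finite_perimeter T ->
  is_itv_family T (itv_family T).
Proof. by move=> mT fT; apply: (@xgetI _ _ _ (gap_family T)); exact: gap_family_valid. Qed.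

End IntervalFamily.

Section InnerIntervals.
Context {R : realType}.
Local Notation mu := (@completed_lebesgue_measure R).
Local Open Scope ereal_scope.

(* An interval of a family satisfying [is_itv_family T] has no boundary point
   of T in its interior, since T is conull there. *)
Lemma itv_family_no_inner_bdry (T : set R) F I (l u : \bar R) r :
  is_itv_family T F -> F I -> I = ecc l u -> l < r%:E -> r%:E < u -> ~ mbdry T r.
Proof.
move=> [_ _ /negligible_null FT] FI EI lr ru.
have [d d0 Hd] := eoo_nbhs (conj lr ru).
apply: locally_null_compl_not_bdry; exists d => //.
apply: null_sub FT => y [yin nTy]; right; split => //; exists I => //.
have [ly yu] : eoo l u y by apply: Hd; rewrite -in_ball_itv.
by rewrite EI /=; apply/andP; split; apply: ltW.
Qed.

Lemma itv_family_between_bdry (T : set R) F I (p q x : R) : is_itv_family T F ->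
  F I -> mbdry T p -> mbdry T q -> I x -> (p <= x <= q)%R -> ~ mbdry T x ->
  exists l u : R, [/\ (p <= l)%R, (l < u)%R, (u <= q)%R & I = [set` `[l, u]]].
Proof.
move=> TF FI Tp Tq Ix /andP[px xq] nTx.
have [cI _ _] := TF; have [l [u [lu EI]]] := cI I FI.
have noB := itv_family_no_inner_bdry TF FI EI.
have := Ix; rewrite EI => /andP[lx xu].
have pl : p%:E <= l.
  rewrite leNgt; apply/negP => lp; have [pu|up] := ltP (p%:E) u; first exact: noB pu Tp.
  apply: nTx; suff -> : x = p by [].
  by apply/eqP; rewrite eq_le px andbT -lee_fin; exact: le_trans xu up.
have uq : u <= q%:E.
  rewrite leNgt; apply/negP => qu; have [lq|ql] := ltP l (q%:E); first exact: noB lq qu Tq.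
  apply: nTx; suff -> : x = q by [].
  by apply/eqP; rewrite eq_le xq /= -lee_fin; exact: le_trans ql lx.
case: l lu EI pl lx noB => [l| |] lu EI pl lx noB; first last.
- by rewrite leeNy_eq in pl.
- by rewrite ltNge leey in lu.
case: u uq lu EI xu noB => [u| |] uq lu EI xu noB; first last.
- by rewrite ltNge leNye in lu.
- by rewrite leye_eq in uq.
by move: uq lu pl; rewrite !lee_fin lte_fin => uq lu pl; exists l, u.
Qed.

Lemma itv_min_cc (l u : R) : (l <= u)%R -> itv_min [set` `[l, u]] = l.
Proof.
move=> lu; rewrite /itv_min; suff -> : ereal_inf (EFin @` [set` `[l, u]]) = l%:E by [].
apply/eqP; rewrite eq_le; apply/andP; split.
  by apply: ereal_inf_lbound; exists l => //=; rewrite in_itv /= lexx lu.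
by apply: le_ereal_inf_tmp => _ [y /= + <-]; rewrite in_itv /= lee_fin => /andP[].
Qed.

Lemma itv_max_cc (l u : R) : (l <= u)%R -> itv_max [set` `[l, u]] = u.
Proof.
move=> lu; rewrite /itv_max; suff -> : ereal_sup (EFin @` [set` `[l, u]]) = u%:E by [].
apply/eqP; rewrite eq_le; apply/andP; split.
  by apply: ge_ereal_sup => _ [y /= + <-]; rewrite in_itv /= lee_fin => /andP[].
by apply: ereal_sup_ubound; exists u => //=; rewrite in_itv /= lexx lu.
Qed.

(* Countable subadditivity for a disjoint family of nondegenerate intervals:
   each contains a rational, which indexes the family by natural numbers. *)
Lemma mu_bigcup_disjoint_itvs (H : set (set R)) :
  (forall I, H I -> exists l u : R, (l < u)%R /\ I = [set` `[l, u]]) ->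
  (forall I J, H I -> H J -> I <> J -> I `&` J = set0) ->
  mu (\bigcup_(I in H) I) <= \esum_(I in H) mu I.
Proof.
move=> Hitv Hdis.
pose rat_of (I : set R) : rat := xget 0%R [set r : rat | I (ratr r)].
have rat_ofP I : H I -> I (ratr (rat_of I)).
  move=> HI; have [l [u [lu ->]]] := Hitv I HI.
  have [r] := rat_in_itvoo lu; rewrite !in_itv /= => /andP[h1 h2].
  apply: (@xgetI _ _ [set r : rat | [set` `[l, u]] (ratr r)] r).
  by rewrite /= in_itv /= (ltW h1) (ltW h2).
pose c (I : set R) : nat := choice.pickle (rat_of I).
have c_inj I J : H I -> H J -> c I = c J -> I = J.
  move=> HI HJ /(pcan_inj choice.pickleK_inv) E; apply: contrapT => IJ.
  have /seteqP[+ _] := Hdis I J HI HJ IJ; apply; split; first exact: rat_ofP.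
  by rewrite E; exact: rat_ofP.
pose e (n : nat) : set R := xget set0 [set I | H I /\ c I = n].
have ecK I : H I -> e (c I) = I.
  move=> HI; have [HJ cJ] : H (e (c I)) /\ c (e (c I)) = c I.
    by apply: (@xgetI _ _ [set I0 | H I0 /\ c I0 = c I] I).
  exact: c_inj.
have einj : set_inj (c @` H) e.
  by move=> _ _ /set_mem[I HI <-] /set_mem[J HJ <-]; rewrite !ecK// => ->.
have eH : e @` (c @` H) = H.
  apply/seteqP; split; first by move=> _ [_ [I HI <-] <-]; rewrite ecK.
  by move=> I HI; exists (c I); [exists I|rewrite ecK].
rewrite -[in X in _ <= X]eH esum_set_image; [|by move=> *; exact: mu_ge0|exact: einj].
pose F n := if n \in c @` H then e n else set0.
apply: (@le_trans _ _ (mu (\bigcup_n F n))).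
  apply: mu_le => x [I HI Ix]; exists (c I) => //.
  by rewrite /F ifT ?ecK//; apply/mem_set; exists I.
apply: (le_trans (mu_bigcup F)); rewrite [X in _ <= X]eseries_mkcond.
apply: lee_nneseries => [n _ _|n _]; first exact: mu_ge0.
by rewrite /F; case: ifPn => _ //; rewrite null_set0.
Qed.

Definition inner_itvs (T : set R) (p q : R) : set (set R) :=
  [set I | itv_family T I /\ exists l u : R,
     [/\ (p <= l)%R, (l < u)%R, (u <= q)%R & I = [set` `[l, u]]]].

Lemma mu_bigcup_inner_itvs (T : set R) p q : is_itv_family T (itv_family T) ->
  mu (\bigcup_(I in inner_itvs T p q) I) <= \esum_(I in inner_itvs T p q) mu I.
Proof.
move=> [_ dis _]; apply: mu_bigcup_disjoint_itvs.
  by move=> I [_ [l [u [_ lu _ ->]]]]; exists l, u.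
by move=> I J [TI _] [TJ _]; exact: dis.
Qed.

Lemma inner_itvs_cover (S : set R) (p q : R) : lebesgue_measurable S ->
  finite_perimeter S -> mbdry S p -> mbdry S q ->
  exists2 N : set R, mu N = 0 & `[p, q] `<=` N `|`
    ((\bigcup_(I in inner_itvs S p q) I) `|` (\bigcup_(I in inner_itvs (~` S) p q) I)).
Proof.
move=> mS fS Sp Sq.
have mC := measurableC_leb mS; have CB := mbdryC mS.
have fC : finite_perimeter (~` S) by rewrite /finite_perimeter CB.
have VS := itv_family_valid mS fS; have VC := itv_family_valid mC fC.
have [_ _ /negligible_null NS] := VS; have [_ _ /negligible_null NC] := VC.
set ZS := (_ `|` _) in NS; set ZC := (_ `|` _) in NC.
have B0 : mu (mbdry S) = 0 := null_finite fS.
exists (mbdry S `|` ZS `|` ZC); first by apply: null_setU => //; apply: null_setU.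
move=> x /= xpq; have [Sx|nSx] := pselect (mbdry S x); first by left; left; left.
have [ZSx|nZSx] := pselect (ZS x); first by left; left; right.
have [ZCx|nZCx] := pselect (ZC x); first by left; right.
right; have [Sx|nSx'] := pselect (S x).
  have [I FI Ix] : (\bigcup_(I in itv_family S) I) x.
    by apply: contrapT => nx; apply: nZSx; left.
  have [l [u [pl lu uq EI]]] := itv_family_between_bdry VS FI Sp Sq Ix xpq nSx.
  by left; exists I => //; split => //; exists l, u.
have [I FI Ix] : (\bigcup_(I in itv_family (~` S)) I) x.
  by apply: contrapT => nx; apply: nZCx; left.
rewrite -CB in Sp Sq nSx.
have [l [u [pl lu uq EI]]] := itv_family_between_bdry VC FI Sp Sq Ix xpq nSx.
by right; exists I => //; split => //; exists l, u.
Qed.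

Lemma inner_itvs_length (S : set R) (p q : R) : lebesgue_measurable S ->
  finite_perimeter S -> mbdry S p -> mbdry S q -> (p <= q)%R ->
  (q - p)%:E <= \esum_(I in inner_itvs S p q) mu I + \esum_(I in inner_itvs (~` S) p q) mu I.
Proof.
move=> mS fS Sp Sq pq.
have fC : finite_perimeter (~` S) by rewrite /finite_perimeter mbdryC.
have [N N0 cov] := inner_itvs_cover mS fS Sp Sq.
rewrite -mu_cc//; apply: le_trans (mu_le cov) _.
rewrite (le_trans (mu_setU _ _))// N0 add0e (le_trans (mu_setU _ _))//.
apply: leeD; apply: mu_bigcup_inner_itvs; apply: itv_family_valid => //.
exact: measurableC_leb.
Qed.

End InnerIntervals.

Section Omega.
Context {R : realType}.
Local Notation mu := (@completed_lebesgue_measure R).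
Local Open Scope ereal_scope.

Lemma esum_subset (T : choiceType) (A B : set T) (f : T -> \bar R) : A `<=` B ->
  (forall x, B x -> 0 <= f x) -> \esum_(i in A) f i <= \esum_(i in B) f i.
Proof.
move=> AB f0; rewrite esum_mkcond [X in _ <= X]esum_mkcond; apply: le_esum => x _.
case: ifPn => [/set_mem/AB/mem_set ->//|_]; by case: ifPn => // /set_mem/f0.
Qed.

Lemma omega_term_ge0 (A I : set R) :
  0 <= mu I * ((\1_A (itv_min I))%:E + (\1_A (itv_max I))%:E).
Proof. by rewrite mule_ge0 ?mu_ge0// adde_ge0// lee_fin indic_ge0. Qed.

Lemma omega_hat_ge0 (T : set R) (Rr : R) (A : set R) : 0 <= omega_hat T Rr A.
Proof.
rewrite /omega_hat mule_ge0 ?lee_fin ?invr_ge0// adde_ge0//;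
  by apply: esum_ge0 => I _; exact: omega_term_ge0.
Qed.

(* An interval of I(T) inside [p, q], with a < p <= q < b and q - p <= Rr,
   has both endpoints in (a, b) and length at most Rr: it contributes twice
   its length to omega_{T,Rr}((a, b)). *)
Lemma omega_ge_inner (T : set R) (Rr a b p q : R) : (a < p)%R -> (q < b)%R ->
  (q - p <= Rr)%R ->
  \esum_(I in inner_itvs T p q) mu I + \esum_(I in inner_itvs T p q) mu I
    <= omega T Rr `]a, b[.
Proof.
move=> ap qb qpR; rewrite -esumD; [|by move=> *; exact: mu_ge0..].
apply: (@le_trans _ _ (\esum_(I in inner_itvs T p q)
    (mu I * ((\1_(`]a, b[) (itv_min I))%:E + (\1_(`]a, b[) (itv_max I))%:E)))).
  apply: le_esum => I [TI [l [u [pl lu uq ->]]]].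
  rewrite itv_min_cc ?itv_max_cc ?(ltW lu)// mu_cc ?(ltW lu)//.
  rewrite !indicE !mem_set /= ?in_itv /=; try by apply/andP; split; lra.
  by rewrite -!EFinD -EFinM lee_fin; lra.
apply: esum_subset => [I [TI [l [u [pl lu uq EI]]]]|I _]; last exact: omega_term_ge0.
by split => //; rewrite EI mu_cc ?lee_fin; [lra|exact: ltW].
Qed.

Lemma le_half_sum (x : R) (e1 e2 w1 w2 : \bar R) : 0 <= e1 -> 0 <= e2 ->
  x%:E <= e1 + e2 -> e1 + e1 <= w1 -> e2 + e2 <= w2 ->
  x%:E <= (w1 + w2) * (2^-1)%:E.
Proof.
move=> e10 e20 xe e1w e2w.
have xxw : x%:E + x%:E <= w1 + w2.
  by apply: le_trans (leeD e1w e2w); apply: le_trans (leeD xe xe) _; rewrite addeACA.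
have w0 : 0 <= w1 + w2 by apply: le_trans (leeD e1w e2w); rewrite !adde_ge0.
move: xxw w0; case: (w1 + w2) => [w||] //; first by rewrite -EFinD -EFinM !lee_fin; lra.
by move=> _ _; rewrite gt0_mulye ?leey// lte_fin invr_gt0.
Qed.

Lemma width_le_omega_hat (S : set R) (Rr a b p q : R) : lebesgue_measurable S ->
  finite_perimeter S -> (`]a, b[ `&` mbdry S) p -> (`]a, b[ `&` mbdry S) q ->
  (p <= q)%R -> (b - a <= Rr)%R -> (q - p)%:E <= omega_hat S Rr `]a, b[.
Proof.
move=> mS fS [/= pab Sp] [/= qab Sq] pq baR.
move: pab qab; rewrite !in_itv /= => /andP[ap pb] /andP[aq qb].
have qpR : (q - p <= Rr)%R by lra.
apply: le_half_sum (inner_itvs_length mS fS Sp Sq pq)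
  (omega_ge_inner S ap qb qpR) (omega_ge_inner (~` S) ap qb qpR);
  by apply: esum_ge0 => *; exact: mu_ge0.
Qed.

End Omega.

Section NonMonotonicity.
Context {R : realType}.
Local Notation mu := (@completed_lebesgue_measure R).
Local Open Scope ereal_scope.
Local Notation symdiff M S := ((M `\` S) `|` (S `\` M)).

Lemma NM_le_monotone (S U M : set R) : Defs.monotone M ->
  NM S U <= mu (U `&` symdiff M S).
Proof. by move=> mM; apply: ereal_inf_lbound; exists M. Qed.

Lemma symdiff_full (G M S : set R) : G `<=` M -> G `&` symdiff M S `<=` G `&` ~` S.
Proof. by move=> GM x [Gx [[_ nSx]|[_ /(_ (GM x Gx))]]]. Qed.

Lemma symdiff_empty (G M S : set R) : G `&` M = set0 ->
  G `&` symdiff M S `<=` G `&` S.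
Proof.
move=> GM x [Gx [[Mx _]|[Sx _]]] //.
by have : (G `&` M) x by []; rewrite GM.
Qed.

Lemma symdiff_le_width (U S M : set R) (a b p q : R) : U `<=` `[a, b] ->
  (a <= p)%R -> (p <= q)%R -> (q <= b)%R ->
  mu (eoo a%:E p%:E `&` symdiff M S) = 0 -> mu (eoo q%:E b%:E `&` symdiff M S) = 0 ->
  mu (U `&` symdiff M S) <= (q - p)%:E.
Proof.
move=> Uab ap pq qb Nl Nr.
set Delta := symdiff M S in Nl Nr *.
have sub : U `&` Delta `<=` [set a] `|` [set b] `|` (eoo a%:E p%:E `&` Delta)
    `|` (eoo q%:E b%:E `&` Delta) `|` `[p, q].
  move=> x [/Uab + Dx]; rewrite /= in_itv /= => /andP[ax xb].
  have [xp|px] := ltP x p.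
    have [->|xa] := eqVneq x a; first by left; left; left; left.
    by left; left; right; split => //; split; rewrite lte_fin // lt_neqAle ax eq_sym xa.
  have [qx|xq] := ltP q x; last by right; rewrite /= in_itv /= px xq.
  have [->|xb'] := eqVneq x b; first by left; left; left; right.
  by left; right; split => //; split; rewrite lte_fin // lt_neqAle xb xb'.
apply: le_trans (mu_le sub) _; apply: le_trans (mu_setU _ _) _.
by rewrite mu_cc// !null_setU ?add0e ?mu_set1.
Qed.

Lemma no_bdry_beside (S : set R) (a b p q : R) : (p <= b)%R -> (a <= q)%R ->
  `]a, b[ `&` mbdry S `<=` `[p, q] ->
  (forall x, eoo a%:E p%:E x -> ~ mbdry S x) /\ (forall x, eoo q%:E b%:E x -> ~ mbdry S x).
Proof.
move=> pb aq bdry_pq; split => x [lx xu] Sx; rewrite !lte_fin in lx xu.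
  have /bdry_pq : (`]a, b[ `&` mbdry S) x by split; rewrite //= in_itv /= lx /=; lra.
  by rewrite /= in_itv /=; lra.
have /bdry_pq : (`]a, b[ `&` mbdry S) x by split; rewrite //= in_itv /= xu andbT; lra.
by rewrite /= in_itv /=; lra.
Qed.

(* First inequality: if the boundary points of S in (a, b) lie in [p, q], then
   S is null or conull on (a, p) and on (q, b), and one of the monotone sets
   empty, R, [p, +oo), (-oo, q] witnesses NM_S(U) <= q - p. *)
Lemma NM_le_width (S U : set R) (a b p q : R) : lebesgue_measurable S ->
  U `<=` `[a, b] -> (a <= p)%R -> (p <= q)%R -> (q <= b)%R ->
  `]a, b[ `&` mbdry S `<=` `[p, q] -> NM S U <= (q - p)%:E.
Proof.
move=> mS Uab ap pq qb bdry_pq.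
have [noBl noBr] := no_bdry_beside (le_trans pq qb) (le_trans ap pq) bdry_pq.
have width M : Defs.monotone M -> mu (eoo a%:E p%:E `&` symdiff M S) = 0 ->
    mu (eoo q%:E b%:E `&` symdiff M S) = 0 -> NM S U <= (q - p)%:E.
  by move=> mM Nl Nr; apply: le_trans (NM_le_monotone S U mM) (symdiff_le_width Uab ap pq qb Nl Nr).
have leftP : forall x, eoo a%:E p%:E x -> (x < p)%R by move=> x [_]; rewrite lte_fin.
have rightP : forall x, eoo q%:E b%:E x -> (q < x)%R by move=> x []; rewrite lte_fin.
case: (gap_dichotomy mS noBl) => Nl; case: (gap_dichotomy mS noBr) => Nr.
- apply: (width set0); first by left.
    by apply: null_sub Nl; apply: symdiff_empty; rewrite setI0.
  by apply: null_sub Nr; apply: symdiff_empty; rewrite setI0.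
- apply: (width [set` `[p, +oo[%R]); first by right; right; exists p; left.
    apply: null_sub Nl; apply: symdiff_empty; apply/seteqP; split => // x [/leftP].
    by rewrite /= in_itv /= andbT => xp; rewrite leNgt xp.
  apply: null_sub Nr; apply: symdiff_full => x /rightP qx.
  by rewrite /= in_itv /= andbT; lra.
- apply: (width [set` `]-oo, q]%R]); first by right; right; exists q; right; right; left.
    apply: null_sub Nl; apply: symdiff_full => x /leftP xp.
    by rewrite /= in_itv /=; lra.
  apply: null_sub Nr; apply: symdiff_empty; apply/seteqP; split => // x [/rightP].
  by rewrite /= in_itv /= => qx; rewrite leNgt qx.
- apply: (width setT); first by right; left.
    by apply: null_sub Nl; exact: symdiff_full.
  by apply: null_sub Nr; exact: symdiff_full.
Qed.

End NonMonotonicity.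

Section Diameter.
Context {R : realType}.
Local Open Scope ereal_scope.

Lemma diam_set0 : diam (@set0 R) = 0.
Proof. by rewrite /diam asboolT. Qed.

Lemma diam_extremes (D : set R) (p q : R) : D p -> D q -> D `<=` `[p, q] ->
  diam D = (q - p)%:E.
Proof.
move=> Dp Dq Dpq; have /= := Dpq q Dq; rewrite in_itv /= => /andP[pq _].
rewrite /diam asboolF; last by move=> D0; rewrite D0 in Dp.
apply/eqP; rewrite eq_le; apply/andP; split.
  apply: ge_ereal_sup => _ [x /Dpq + [y /Dpq + <-]]; rewrite /= !in_itv /=.
  by move=> /andP[? ?] /andP[? ?]; rewrite lee_fin ler_norml; apply/andP; split; lra.
apply: ereal_sup_ubound; exists q => //; exists p => //.
by rewrite ger0_norm// subr_ge0.
Qed.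

End Diameter.

Theorem mainTheorem16 (R : realType) (a b : R) (U : set R) (Rr : R) :
  a < b -> lebesgue_measurable U -> U `<=` `[a, b] -> b - a <= Rr ->
  forall S : set R, lebesgue_measurable S -> finite_perimeter S ->
    (NM S U <= diam (`]a, b[ `&` mbdry S))%E /\
    (diam (`]a, b[ `&` mbdry S) <= omega_hat S Rr `]a, b[)%E.
Proof.
move=> ab _ Uab baR S mS fS.
set D := `]a, b[ `&` mbdry S.
have [[x0 Dx0]|noD] := pselect (D !=set0); last first.
  (* no boundary point in (a, b): NM_S(U) = 0, taking p = q = a *)
  have D0 : D = set0 by apply/seteqP; split => // x Dx; apply: noD; exists x.
  rewrite D0 diam_set0; split; last exact: omega_hat_ge0.
  have noB : D `<=` `[a, a] by rewrite D0.
  by have := NM_le_width mS Uab (lexx a) (lexx a) (ltW ab) noB; rewrite subrr.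
have [p [q [Dp Dq Dpq]]] := finite_extremes (finite_setIr _ fS) (ex_intro _ x0 Dx0).
have /= := Dpq q Dq; rewrite in_itv /= => /andP[pq _].
have [[/= + _] [/= + _]] := (Dp, Dq); rewrite !in_itv /= => /andP[ap _] /andP[_ qb].
rewrite (diam_extremes Dp Dq Dpq); split.
  exact: NM_le_width (ltW ap) pq (ltW qb) Dpq.
exact: width_le_omega_hat.
Qed.
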